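(* Let $T$ be a tree with positive edge weights rooted at the homebase $r$, and let $q\ge 0$. In every cost-optimal strategy exploring $T$, for every vertex $v\ne r$: if some agent leaves the subtree $T_v$ (traverses the edge from $v$ to its parent after having visited $T_v$), then that agent has explored $T_v$ on its own, i.e., no other agent visits any vertex of $T_v$.
   Context: Exploration model: given a connected graph with positive edge weights, a homebase vertex, and invoking cost $q\ge 0$, a strategy is a sequence of moves, each either invoking a new agent (appearing at the homebase) or an agent traversing an edge incident to its current vertex. A vertex is explored when first visited; the strategy explores the graph when every vertex has been visited by some agent (agents need not return). With $k$ agents, agent $i$ traversing total distance $d_i$ (weights counted with multiplicity), the cost is $kq+\sum_i d_i$; a strategy is cost-optimal if it explores the graph with minimum cost (off-line setting). $T_v$ denotes the subtree consisting of $v$ and its descendants. *)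

From HB Require Import structures.
From mathcomp Require Import all_boot all_order all_algebra.
From mathcomp Require Import reals.
Set Implicit Arguments. Unset Strict Implicit. Unset Printing Implicit Defensive.
Import Order.TTheory GRing.Theory Num.Theory.
Local Open Scope ring_scope.

(* A rooted weighted tree on a finite vertex type V is given by its root r   *)
(* and a parent function par (par r = r, every vertex reaches r by iterating *)
(* par).  Its edges are {u, par u} for u <> r, and w u is the weight of the  *)
(* edge {u, par u}.                                                          *)
Section Exploration.
Variables (R : realType) (V : finType) (r : V) (par : V -> V) (w : V -> R).

Definition is_rooted_tree : Prop :=
  par r = r /\ forall v : V, exists n : nat, iter n par v = r.

Definition tadj (x y : V) : bool :=
  ((x != r) && (par x == y)) || ((y != r) && (par y == x)).

Definition eweight (x y : V) : R := if (x != r) && (par x == y) then w x else w y.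

Definition in_subtree (v u : V) : Prop := exists n : nat, iter n par u = v.

(* moves: invoke a new agent (appears at the homebase r), or agent i      *)
(* (agents numbered 0,1,... in invocation order) traverses an edge to y.   *)
Inductive move := Invoke | Step of nat & V.

(* configuration = sequence of current positions of the invoked agents *)
Definition apply_move (pos : seq V) (m : move) : seq V :=
  match m with
  | Invoke => rcons pos r
  | Step i y => set_nth r pos i y
  end.

Definition valid_move (pos : seq V) (m : move) : bool :=
  match m with
  | Invoke => true
  | Step i y => (i < size pos)%N && tadj (nth r pos i) y
  end.

Definition move_cost (q : R) (pos : seq V) (m : move) : R :=
  match m with
  | Invoke => q
  | Step i y => eweight (nth r pos i) y
  end.

(* configuration before the t-th move (t = size s : final configuration) *)
Definition config (s : seq move) (t : nat) : seq V :=
  foldl apply_move [::] (take t s).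

Definition valid_strategy (s : seq move) : Prop :=
  forall t, (t < size s)%N -> valid_move (config s t) (nth Invoke s t).

Definition visits (s : seq move) (j : nat) (x : V) : Prop :=
  exists t, (t <= size s)%N /\ (j < size (config s t))%N /\ nth r (config s t) j = x.

Definition explores (s : seq move) : Prop :=
  forall x : V, exists j, visits s j x.

(* cost = k q + sum_i d_i *)
Definition cost (q : R) (s : seq move) : R :=
  \sum_(t < size s) move_cost q (config s t) (nth Invoke s t).

Definition cost_optimal (q : R) (s : seq move) : Prop :=
  valid_strategy s /\ explores s /\
  forall s', valid_strategy s' -> explores s' -> cost q s <= cost q s'.

Definition leaves_subtree (s : seq move) (i : nat) (v : V) : Prop :=
  exists t, (t < size s)%N /\ nth Invoke s t = Step i (par v) /\
            (i < size (config s t))%N /\ nth r (config s t) i = v.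

End Exploration.

(* Suppose agent [i] steps from [v] to [par v] while another agent [j] visits
   [T_v].  Both walks start at the root, so both pass through [v], and the walk
   of [i] contains a detour [par v, v, Z, par v] where [Z] is a closed walk at
   [v].  Deleting the detour from the walk of [i] and splicing [Z] into the walk
   of [j] at [v] keeps both walks rooted and every vertex visited, uses the same
   agents, and saves the edge [{v, par v}] twice.  A strategy costs [q] times
   its number of agents plus the lengths of their walks, and any family of
   rooted walks is realised by invoking the agents one after the other, so
   this contradicts optimality. *)

From HB Require Import structures.
From mathcomp Require Import all_boot all_order all_algebra.
From mathcomp Require Import reals.
From Stdlib Require Import Classical.
From mathcomp Require Import lra.
Set Implicit Arguments. Unset Strict Implicit. Unset Printing Implicit Defensive.
Import Order.TTheory GRing.Theory Num.Theory.
Local Open Scope ring_scope.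

Section WalkCost.
Variables (R : nmodType) (T : eqType) (c : T -> T -> R).

Definition walk_cost (x : T) (L : seq T) : R := \sum_(d <- pairmap c x L) d.

Lemma walk_cost_cons x y L : walk_cost x (y :: L) = c x y + walk_cost y L.
Proof. by rewrite /walk_cost /= big_cons. Qed.

Lemma walk_cost_cat x L1 L2 :
  walk_cost x (L1 ++ L2) = walk_cost x L1 + walk_cost (last x L1) L2.
Proof. by rewrite /walk_cost pairmap_cat big_cat. Qed.

Lemma walk_cost_rcons x L y :
  walk_cost x (rcons L y) = walk_cost x L + c (last x L) y.
Proof. by rewrite -cats1 walk_cost_cat walk_cost_cons /walk_cost big_nil addr0. Qed.

Lemma walk_cost_insert_loop x C L D : last (last x C) L = last x C ->
  walk_cost x (C ++ L ++ D) = walk_cost x (C ++ D) + walk_cost (last x C) L.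
Proof. by move=> loop; rewrite !walk_cost_cat loop addrA addrAC. Qed.

End WalkCost.

Lemma path_insert_loop (T : Type) (e : rel T) x C L D :
  last (last x C) L = last x C ->
  path e x (C ++ L ++ D) = path e x (C ++ D) && path e (last x C) L.
Proof. by move=> loop; rewrite !cat_path loop -andbA (andbC (path e _ D)). Qed.

Section LoopTransfer.
Variables (T : eqType) (x p v : T) (Q Z Y C D : seq T).
Hypotheses (last_Q : last x Q = p) (last_Z : last v Z = v) (last_C : last x C = v).

Let loop_Q : last (last x Q) (v :: rcons Z p) = last x Q.
Proof. by rewrite last_Q /= last_rcons. Qed.

Let loop_C : last (last x C) Z = last x C.
Proof. by rewrite last_C. Qed.

Lemma path_loop_transfer (e : rel T) :
  path e x (Q ++ (v :: rcons Z p) ++ Y) -> path e x (C ++ D) ->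
  path e x (Q ++ Y) /\ path e x (C ++ Z ++ D).
Proof.
rewrite (path_insert_loop _ _ loop_Q) last_Q => /andP [-> /= /andP [_]].
rewrite rcons_path => /andP [path_Z _] path_CD.
by rewrite (path_insert_loop _ _ loop_C) path_CD last_C.
Qed.

Lemma walk_cost_loop_transfer (R : nmodType) (c : T -> T -> R) :
  walk_cost c x (Q ++ (v :: rcons Z p) ++ Y) + walk_cost c x (C ++ D) =
  walk_cost c x (Q ++ Y) + walk_cost c x (C ++ Z ++ D) + (c p v + c v p).
Proof.
rewrite (walk_cost_insert_loop _ _ loop_Q) (walk_cost_insert_loop _ _ loop_C).
rewrite last_Q last_C walk_cost_cons walk_cost_rcons last_Z !addrA.
by rewrite [LHS](ACl (1*5*3*2*4)).
Qed.

Lemma mem_loop_transfer :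
  {subset (x :: Q ++ (v :: rcons Z p) ++ Y) ++ (x :: C ++ D) <=
          (x :: Q ++ Y) ++ (x :: C ++ Z ++ D)}.
Proof.
have p_Q : p \in x :: Q by rewrite -last_Q mem_last.
have v_C : v \in x :: C by rewrite -last_C mem_last.
move=> y; rewrite !(mem_cat, inE, mem_rcons) in p_Q v_C *.
have [-> _ | _] := eqVneq y v; first by case/orP: v_C => ->; rewrite ?orbT.
have [-> _ | _] := eqVneq y p; first by case/orP: p_Q => ->; rewrite ?orbT.
by case: (y == x) (y \in Q) (y \in Y) (y \in C) (y \in Z) (y \in D) => [] [] [] [] [].
Qed.

End LoopTransfer.

Lemma sum_ord_if_eq (R : nmodType) (a : R) i n : (i < n)%N ->
  \sum_(k < n) (if k == i :> nat then a else 0) = a.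
Proof. by move=> lt_in; rewrite -big_mkcond (big_ord1_eq _ (fun=> a)) lt_in. Qed.

Lemma sum_ord_update2 (R : zmodType) n (F G : nat -> R) i j :
  i != j -> (i < n)%N -> (j < n)%N -> (forall k, k != i -> k != j -> F k = G k) ->
  \sum_(k < n) F k + (G i + G j) = \sum_(k < n) G k + (F i + F j).
Proof.
move=> ij lt_in lt_jn FG.
have F_G k : F k = G k + ((if k == i then F i - G i else 0) + (if k == j then F j - G j else 0)).
  have [-> | ki] := eqVneq k i; first by rewrite (negbTE ij) addr0 addrC subrK.
  have [-> | kj] := eqVneq k j; first by rewrite add0r addrC subrK.
  by rewrite FG ?addr0.
under eq_bigr do rewrite F_G.
by rewrite !big_split /= !sum_ord_if_eq // -addrA addrACA !subrK.
Qed.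

Section Subtrees.
Variables (V : finType) (r : V) (par : V -> V).

Lemma in_subtree_of_par v x : in_subtree par v (par x) -> in_subtree par v x.
Proof. by case=> n h; exists n.+1; rewrite iterSr. Qed.

Lemma in_subtree_par v x : in_subtree par v x -> x != v -> in_subtree par v (par x).
Proof.
case=> [[|n] /= h] ne; first by rewrite h eqxx in ne.
by exists n; rewrite -iterSr.
Qed.

Lemma root_notin_subtree v : par r = r -> v != r -> ~ in_subtree par v r.
Proof.
move=> par_r v_r [n h]; have iter_r : iter n par r = r by elim: n {h} => //= n ->.
by rewrite h in iter_r; rewrite iter_r eqxx in v_r.
Qed.

Lemma tadj_into_subtree v x y : ~ in_subtree par v x -> in_subtree par v y ->
  tadj r par x y -> y = v /\ x = par v.
Proof.
move=> x_v y_v /orP [/andP [_ /eqP par_x] | /andP [_ /eqP par_y]].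
  by case: x_v; apply: in_subtree_of_par; rewrite par_x.
have [y_eq_v|y_ne_v] := eqVneq y v; first by rewrite -par_y y_eq_v.
by case: x_v; rewrite -par_y; apply: in_subtree_par.
Qed.

Lemma path_enters_subtree v x L : path (tadj r par) x L -> ~ in_subtree par v x ->
  (exists2 y, y \in L & in_subtree par v y) ->
  exists Q Z, L = Q ++ v :: Z /\ last x Q = par v.
Proof.
elim: L x => [|y L IH] x /=; first by move=> _ _ [].
move=> /andP [xy pL] x_v [z z_L z_v].
have [y_v | y_v] := classic (in_subtree par v y).
  by have [-> ->] := tadj_into_subtree x_v y_v xy; exists [::], L.
have [|Q [Z [-> lQ]]] := IH y pL y_v.
  by exists z => //; move: z_L; rewrite inE => /predU1P [zy | //]; rewrite zy in z_v.
by exists (y :: Q), Z.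
Qed.

End Subtrees.

Lemma eweight_gt0 (R : realType) (V : finType) (r : V) (par : V -> V) (w : V -> R) x y :
  (forall u, u != r -> 0 < w u) -> tadj r par x y -> 0 < eweight r par w x y.
Proof.
rewrite /eweight /tadj => w_pos; case: ifP => [/andP [x_r _] _ | _ /= /andP [y_r _]].
all: exact: w_pos.
Qed.

Section Strategies.
Variables (R : realType) (V : finType) (r : V) (par : V -> V) (w : V -> R) (q : R).

Local Notation valid := (valid_strategy r par).
Local Notation len := (walk_cost (eweight r par w) r).

Definition final_config (s : seq (move V)) : seq V := foldl (apply_move r) [::] s.

Definition agent_walk (s : seq (move V)) (k : nat) : seq V :=
  pmap (fun m => if m is Step i y then (if i == k then Some y else None) else None) s.

Definition num_agents (s : seq (move V)) : nat :=
  count (fun m => if m is Invoke then true else false) s.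

Lemma config_size s : config r s (size s) = final_config s.
Proof. by rewrite /config take_size. Qed.

Lemma config_rcons s m t : (t <= size s)%N -> config r (rcons s m) t = config r s t.
Proof. by move=> le_ts; rewrite /config -cats1 takel_cat. Qed.

Lemma final_config_rcons s m :
  final_config (rcons s m) = apply_move r (final_config s) m.
Proof. exact: foldl_rcons. Qed.

Lemma agent_walk_cat s1 s2 k : agent_walk (s1 ++ s2) k = agent_walk s1 k ++ agent_walk s2 k.
Proof. exact: pmap_cat. Qed.

Lemma agent_walk_rcons_invoke s k : agent_walk (rcons s (Invoke V)) k = agent_walk s k.
Proof. by rewrite -cats1 agent_walk_cat cats0. Qed.

Lemma agent_walk_rcons_step s i y k :
  agent_walk (rcons s (Step i y)) k = agent_walk s k ++ (if i == k then [:: y] else [::]).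
Proof. by rewrite -cats1 agent_walk_cat /agent_walk /=; case: (i == k). Qed.

Lemma agent_walk_steps i L k : agent_walk (map (Step i) L) k = if i == k then L else [::].
Proof.
elim: L => [|y L IH]; first by case: (i == k).
by rewrite /agent_walk /= in IH *; case: (i == k) IH => /= ->.
Qed.

Lemma num_agents_cat s1 s2 : num_agents (s1 ++ s2) = (num_agents s1 + num_agents s2)%N.
Proof. exact: count_cat. Qed.

Lemma num_agents_rcons s m :
  num_agents (rcons s m) = (num_agents s + if m is Invoke then 1 else 0)%N.
Proof. by rewrite -cats1 num_agents_cat; case: m. Qed.

Lemma num_agents_steps i L : num_agents (map (Step i) L) = 0%N.
Proof. by elim: L. Qed.

Lemma valid_strategy_rcons s m :
  valid (rcons s m) <-> valid s /\ valid_move r par (final_config s) m.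
Proof.
have last_move : nth (Invoke V) (rcons s m) (size s) = m by rewrite nth_rcons ltnn eqxx.
split=> [val_sm | [val_s val_m] t].
  split; last first.
    have := val_sm (size s); rewrite size_rcons ltnSn config_rcons // last_move.
    by rewrite config_size; apply.
  move=> t lt_ts; have lt_tsm : (t < size (rcons s m))%N by rewrite size_rcons ltnW.
  by have := val_sm t lt_tsm; rewrite config_rcons ?(ltnW lt_ts) // nth_rcons lt_ts.
rewrite size_rcons ltnS leq_eqVlt => /predU1P [-> | lt_ts].
  by rewrite config_rcons // last_move config_size.
by rewrite config_rcons ?(ltnW lt_ts) // nth_rcons lt_ts; apply: val_s.
Qed.

Lemma valid_strategy_take s t : valid s -> valid (take t s).
Proof.
move=> val_s t' lt_t'; move: (lt_t'); rewrite size_take_min leq_min => /andP [lt_t't lt_t's].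
by rewrite /config take_takel ?(ltnW lt_t't) // nth_take //; apply: val_s.
Qed.

Lemma final_config_walks s : valid s ->
  [/\ size (final_config s) = num_agents s,
      forall k, (k < num_agents s)%N -> nth r (final_config s) k = last r (agent_walk s k),
      forall k, (num_agents s <= k)%N -> agent_walk s k = [::] &
      forall k, path (tadj r par) r (agent_walk s k)].
Proof.
elim/last_ind: s => [_ | s m IH]; first by split => // k; rewrite /agent_walk.
move/valid_strategy_rcons => [/IH [size_s pos_s idle_s path_s] val_m].
rewrite final_config_rcons num_agents_rcons; case: m val_m => [_ | i y /andP [lt_i adj]] /=.
  rewrite addn1; split => [|k|k lt_k|k]; rewrite ?agent_walk_rcons_invoke //.
  - by rewrite size_rcons size_s.
  - rewrite ltnS leq_eqVlt nth_rcons size_s => /predU1P [-> | lt_k].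
      by rewrite ltnn eqxx idle_s.
    by rewrite lt_k pos_s.
  - by rewrite idle_s // ltnW.
rewrite addn0; split => [|k lt_k|k le_k|k]; rewrite ?agent_walk_rcons_step.
- by rewrite size_set_nth size_s; apply/maxn_idPr; rewrite -size_s.
- rewrite nth_set_nth /=; case: eqP => [-> | /eqP ne]; first by rewrite eqxx last_cat.
  by rewrite eq_sym (negbTE ne) cats0 pos_s.
- rewrite idle_s //; case: eqP => // eq_ik.
  by move: lt_i; rewrite size_s eq_ik ltnNge le_k.
- case: eqP => [<- | _]; last by rewrite cats0.
  by rewrite cats1 rcons_path path_s -pos_s -?size_s.
Qed.

Lemma cost_rcons s m :
  cost r par w q (rcons s m) = cost r par w q s + move_cost r par w q (final_config s) m.
Proof.
rewrite /cost size_rcons big_ord_recr /= config_rcons // config_size nth_rcons ltnn eqxx.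
congr (_ + _); apply: eq_bigr => t _; have lt_t := ltn_ord t.
by rewrite config_rcons ?(ltnW lt_t) // nth_rcons lt_t.
Qed.

Lemma cost_agent_walks s n : valid s -> (num_agents s <= n)%N ->
  cost r par w q s = q * (num_agents s)%:R + \sum_(k < n) len (agent_walk s k).
Proof.
elim/last_ind: s => [_ _ | s m IH].
  by rewrite /cost big_ord0 mulr0 add0r big1 // => k _; rewrite /walk_cost big_nil.
move=> /valid_strategy_rcons [val_s val_m].
have [size_s pos_s _ _] := final_config_walks val_s.
rewrite cost_rcons num_agents_rcons => le_n.
rewrite (IH val_s); last exact: leq_trans (leq_addr _ _) le_n.
case: m val_m le_n => [_ _ | i y /andP [lt_i _]] /=.
  under [in RHS]eq_bigr do rewrite agent_walk_rcons_invoke.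
  by rewrite natrD mulrDr mulr1 addrAC.
move: lt_i; rewrite addn0 size_s => lt_in le_n.
have len_step k : len (agent_walk (rcons s (Step i y)) k) = len (agent_walk s k) +
    (if k == i :> nat then eweight r par w (last r (agent_walk s i)) y else 0).
  rewrite agent_walk_rcons_step eq_sym; case: eqP => [-> | _].
    by rewrite cats1 walk_cost_rcons.
  by rewrite cats0 addr0.
under [in RHS]eq_bigr do rewrite len_step.
by rewrite big_split /= sum_ord_if_eq ?(leq_trans lt_in) // pos_s // addrA.
Qed.

Lemma visits_rcons s m k x : visits r (rcons s m) k x <->
  visits r s k x \/
  (k < size (final_config (rcons s m)))%N /\ nth r (final_config (rcons s m)) k = x.
Proof.
split=> [[t [le_t visit]] | [[t [le_t visit]] | visit]].
- move: le_t; rewrite size_rcons leq_eqVlt => /predU1P [eq_t | lt_t].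
    by right; move: visit; rewrite eq_t -(size_rcons s m) config_size.
  by left; exists t; rewrite -(config_rcons m).
- by exists t; rewrite size_rcons leqW // config_rcons.
- by exists (size (rcons s m)); rewrite config_size.
Qed.

Lemma visitsE s k x : valid s ->
  visits r s k x <-> (k < num_agents s)%N /\ x \in r :: agent_walk s k.
Proof.
elim/last_ind: s => [_ | s m IH].
  by split=> [[t [_ []]] | []].
move=> /[dup] /final_config_walks [size_sm pos_sm _ _] /valid_strategy_rcons [val_s val_m].
have [size_s pos_s idle_s _] := final_config_walks val_s.
rewrite visits_rcons (IH val_s) size_sm.
have le_n : (num_agents s <= num_agents (rcons s m))%N by rewrite num_agents_rcons leq_addr.
split=> [[[lt_k x_k] | [lt_k <-]] | ].
- split; first exact: leq_trans lt_k le_n.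
  by rewrite -cats1 agent_walk_cat -cat_cons mem_cat x_k.
- by split=> //; rewrite pos_sm // mem_last.
case: m {val_m size_sm le_n} pos_sm => [|i y] pos_sm; rewrite num_agents_rcons.
  rewrite addn1 ltnS leq_eqVlt agent_walk_rcons_invoke.
  move=> -[/predU1P [eq_k | lt_k] x_k]; last by left.
  move: x_k; rewrite idle_s ?eq_k // inE => /eqP ->; right.
  by rewrite final_config_rcons nth_rcons size_s ltnn eqxx.
rewrite addn0 agent_walk_rcons_step -cat_cons mem_cat => -[lt_k /orP [x_k | ]]; first by left.
case: eqP => // eq_ik; rewrite inE => /eqP ->; right.
by split=> //; rewrite pos_sm ?num_agents_rcons ?addn0 // agent_walk_rcons_step eq_ik eqxx last_cat.
Qed.

Definition strategy_of_walks (n : nat) (f : nat -> seq V) : seq (move V) :=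
  flatten (mkseq (fun k => Invoke V :: map (Step k) (f k)) n).

Lemma strategy_of_walksS n f : strategy_of_walks n.+1 f =
  rcons (strategy_of_walks n f) (Invoke V) ++ map (Step n) (f n).
Proof. by rewrite /strategy_of_walks mkseqS -cats1 flatten_cat /= cats0 cat_rcons. Qed.

Lemma valid_strategy_cat_steps s k L : valid s -> (k < num_agents s)%N ->
  path (tadj r par) (last r (agent_walk s k)) L -> valid (s ++ map (Step k) L).
Proof.
elim/last_ind: L => [|L y IH] val_s lt_k; first by rewrite cats0.
rewrite rcons_path map_rcons -rcons_cat => /andP [path_L adj_y].
apply/valid_strategy_rcons; split; first exact: IH.
have [size_s' pos_s' _ _] := final_config_walks (IH val_s lt_k path_L).
have agents_s' : num_agents (s ++ map (Step k) L) = num_agents s.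
  by rewrite num_agents_cat num_agents_steps addn0.
rewrite /= size_s' agents_s' lt_k pos_s' ?agents_s' //.
by rewrite agent_walk_cat agent_walk_steps eqxx last_cat.
Qed.

Lemma strategy_of_walks_spec n f :
  (forall k, (k < n)%N -> path (tadj r par) r (f k)) ->
  [/\ valid (strategy_of_walks n f), num_agents (strategy_of_walks n f) = n &
      forall k, agent_walk (strategy_of_walks n f) k = if (k < n)%N then f k else [::]].
Proof.
elim: n => [_ | n IH path_f]; first by split=> // k; rewrite /agent_walk.
have [val_n agents_n walks_n] := IH (fun k lt_k => path_f k (ltnW lt_k)).
set s := rcons (strategy_of_walks n f) (Invoke V).
have val_s : valid s by apply/valid_strategy_rcons.
have agents_s : num_agents s = n.+1 by rewrite num_agents_rcons agents_n addn1.
rewrite strategy_of_walksS -/s; split.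
- apply: valid_strategy_cat_steps; rewrite ?agents_s //.
  by rewrite agent_walk_rcons_invoke walks_n ltnn; apply: path_f.
- by rewrite num_agents_cat agents_s num_agents_steps addn0.
move=> k; rewrite agent_walk_cat agent_walk_rcons_invoke walks_n agent_walk_steps ltnS.
by case: ltngtP => [_ | _ | ->]; rewrite ?cats0 ?eqxx.
Qed.

Lemma cost_optimal_walks_le s (f : nat -> seq V) : cost_optimal r par w q s ->
  (forall k, (k < num_agents s)%N -> path (tadj r par) r (f k)) ->
  (forall x, exists2 k, (k < num_agents s)%N & x \in r :: f k) ->
  \sum_(k < num_agents s) len (agent_walk s k) <= \sum_(k < num_agents s) len (f k).
Proof.
move=> [val_s [_ opt_s]] path_f cover_f.
have [val_f agents_f walks_f] := strategy_of_walks_spec path_f.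
have explores_f : explores r (strategy_of_walks (num_agents s) f).
  move=> x; have [k lt_k x_k] := cover_f x; exists k.
  by apply/(visitsE _ _ val_f); rewrite agents_f walks_f lt_k.
have := opt_s _ val_f explores_f.
rewrite (cost_agent_walks val_s (leqnn _)) (cost_agent_walks val_f (eq_leq agents_f)).
rewrite agents_f lerD2l; under [X in _ <= X -> _]eq_bigr do rewrite walks_f ltn_ord.
by [].
Qed.

Lemma cost_optimal_replace_walks_le s i j Wi Wj : cost_optimal r par w q s -> i != j ->
  (i < num_agents s)%N -> (j < num_agents s)%N ->
  path (tadj r par) r Wi -> path (tadj r par) r Wj ->
  {subset (r :: agent_walk s i) ++ (r :: agent_walk s j) <= (r :: Wi) ++ (r :: Wj)} ->
  len (agent_walk s i) + len (agent_walk s j) <= len Wi + len Wj.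
Proof.
move=> opt i_j lt_i lt_j path_i path_j sub_ij.
pose f k := if k == i then Wi else if k == j then Wj else agent_walk s k.
have [f_i f_j] : f i = Wi /\ f j = Wj by rewrite /f eqxx eq_sym (negbTE i_j) eqxx.
have f_other k : k != i -> k != j -> agent_walk s k = f k by rewrite /f => /negbTE-> /negbTE->.
have [val_s [explores_s _]] := opt; have [_ _ _ path_s] := final_config_walks val_s.
have le_sum : \sum_(k < num_agents s) len (agent_walk s k) <= \sum_(k < num_agents s) len (f k).
  apply: (cost_optimal_walks_le opt) => [k _ | y].
    have [-> | k_i] := eqVneq k i; first by rewrite f_i.
    have [-> | k_j] := eqVneq k j; first by rewrite f_j.
    by rewrite -f_other.
  have [k /(visitsE _ _ val_s) [lt_k y_k]] := explores_s y.
  have in_ij : y \in (r :: f i) ++ (r :: f j) -> exists2 k, (k < num_agents s)%N & y \in r :: f k.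
    by rewrite mem_cat => /orP [y_i | y_j]; [exists i | exists j].
  have [k_i | k_i] := eqVneq k i.
    by apply: in_ij; rewrite f_i f_j sub_ij // mem_cat -k_i y_k.
  have [k_j | k_j] := eqVneq k j.
    by apply: in_ij; rewrite f_i f_j sub_ij // mem_cat -k_j y_k orbT.
  by exists k; rewrite -?f_other.
have := sum_ord_update2 (F := fun k => len (agent_walk s k)) (G := fun k => len (f k))
  i_j lt_i lt_j.
move=> /(_ (fun k k_i k_j => congr1 len (f_other k k_i k_j))).
rewrite /= f_i f_j; lra.
Qed.

Section LeavingSubtree.
Hypothesis par_r : par r = r.
Variables (s : seq (move V)) (v : V).
Hypotheses (val_s : valid s) (v_r : v != r).

Lemma leaves_subtree_walk i : leaves_subtree r par s i v ->
  (i < num_agents s)%N /\ exists Q Z Y,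
    [/\ agent_walk s i = Q ++ (v :: rcons Z (par v)) ++ Y, last r Q = par v & last v Z = v].
Proof.
move=> [t [lt_ts [step_t [lt_i pos_i]]]].
have [size_t pos_t _ path_t] := final_config_walks (valid_strategy_take (t := t) val_s).
rewrite /config -/(final_config _) size_t in lt_i pos_i.
have agents_le : (num_agents (take t s) <= num_agents s)%N.
  by rewrite -{2}(cat_take_drop t s) num_agents_cat leq_addr.
split; first exact: leq_trans lt_i agents_le.
have last_X : last r (agent_walk (take t s) i) = v by rewrite -pos_t.
have [|Q [Z [eq_X last_Q]]] := path_enters_subtree (path_t i) (root_notin_subtree par_r v_r).
  exists v; last by exists 0%N.
  by have := mem_last r (agent_walk (take t s) i); rewrite last_X inE (negbTE v_r).
exists Q, Z, (agent_walk (drop t.+1 s) i); split=> //; last first.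
  by move: last_X; rewrite eq_X last_cat last_Q.
rewrite -{1}(cat_take_drop t.+1 s) (take_nth (Invoke V) lt_ts) step_t agent_walk_cat.
by rewrite agent_walk_rcons_step eqxx eq_X -!catA /= cat_rcons.
Qed.

Lemma visits_subtree_walk j u : visits r s j u -> in_subtree par v u ->
  (j < num_agents s)%N /\ exists C D, agent_walk s j = C ++ D /\ last r C = v.
Proof.
move=> /(visitsE _ _ val_s) [lt_j u_j] u_v; split=> //.
have r_v := root_notin_subtree par_r v_r.
have [_ _ _ path_s] := final_config_walks val_s.
have [|C [D [-> _]]] := path_enters_subtree (path_s j) r_v.
  by exists u => //; move: u_j; rewrite inE => /predU1P [u_r | //]; rewrite u_r in u_v.
by exists (rcons C v), D; rewrite cat_rcons last_rcons.
Qed.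

End LeavingSubtree.

End Strategies.

Theorem lemma2 (R : realType) (V : finType) (r : V) (par : V -> V) (w : V -> R)
  (q : R) (s : seq (move V)) :
  is_rooted_tree r par ->
  (forall u : V, u != r -> 0 < w u) ->
  0 <= q ->
  cost_optimal r par w q s ->
  forall (v : V) (i : nat), v != r ->
    leaves_subtree r par s i v ->
    forall (j : nat) (u : V), j <> i -> in_subtree par v u -> ~ visits r s j u.
Proof.
move=> [par_r _] w_pos _ opt v i v_r leaves j u /eqP j_i u_v visit_u.
have val_s := opt.1; have [_ _ _ path_s] := final_config_walks val_s.
have [lt_in [Q [Z [Y [walk_i last_Q last_Z]]]]] := leaves_subtree_walk par_r val_s v_r leaves.
have [lt_jn [C [D [walk_j last_C]]]] := visits_subtree_walk par_r val_s v_r visit_u u_v.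
have := path_s i; have := path_s j; rewrite walk_i walk_j => path_j path_i.
have [path_i' path_j'] := path_loop_transfer last_Q last_Z last_C path_i path_j.
have i_j : i != j by rewrite eq_sym.
have := cost_optimal_replace_walks_le opt i_j lt_in lt_jn path_i' path_j'.
rewrite walk_i walk_j => /(_ (mem_loop_transfer last_Q last_C)).
rewrite walk_cost_loop_transfer //.
have edge_vp : 0 < eweight r par w v (par v) by apply: eweight_gt0; rewrite // /tadj v_r eqxx.
have edge_pv : 0 < eweight r par w (par v) v by apply: eweight_gt0; rewrite // /tadj v_r eqxx orbT.
lra.
Qed.
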